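(* Let $\mathcal{A}=(Q,\Sigma,\delta)$ be a DFA with $Q=\{1,\dots,n\}$. Fix positive integers $d_1,d_2$ and non-empty sets of words $W_1\subseteq\Sigma^{\le d_1}$, $W_2\subseteq\Sigma^{\le d_2}$. Let $R=\{q.w\mid q\in Q,\ w\in W_1\}$ and let $\mathcal{B}=\mathcal{A}_c(W_1,W_2)=(R,W_2W_1,\delta_{\mathcal{B}})$ be the DFA with state set $R$, whose alphabet is the finite set $W_2W_1=\{w_2w_1\mid w_2\in W_2,w_1\in W_1\}$ (each such word treated as a single letter), and $\delta_{\mathcal{B}}(q,w)=q.w$. Let $P_1,P_2$ be positive probability distributions on $W_1,W_2$, put $[P_i]=\sum_{w\in W_i}P_i(w)[w]$, and let $\alpha\in V_R$ be a stochastic vector (non-negative entries summing to $1$, supported on $R$) with $\alpha[P_2][P_1]=\alpha$. Suppose that $W_2W_1$ is complete for $V_R$ with respect to $\alpha$, and that $w_0\in\Sigma^*$ satisfies $Q.w_0=R$. Then: (1) for every $x\in V_R\setminus\langle [R]\rangle$ there exists $w\in W_2W_1$ with $(x,\alpha[w])>(x,\alpha)$; (2) $\mathcal{B}$ is synchronizing and $\mathrm{rt}(\mathcal{B})\le \mathrm{DS}(\alpha)-1$; (3) $\mathcal{A}$ is synchronizing, and $\mathrm{rt}(\mathcal{A})\le |w_0|+\mathrm{rt}(\mathcal{B})(d_1+d_2)\le |w_0|+(\mathrm{DS}(\alpha)-1)(d_1+d_2)$ if $R\ne Q$, while $\mathrm{rt}(\mathcal{A})\le 1+(\mathrm{DS}(\alpha)-2)(d_1+d_2)$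 if $R=Q$.
   Context: A DFA $\mathcal{A}=(Q,\Sigma,\delta)$ has a finite non-empty state set $Q$, finite non-empty alphabet $\Sigma$ and total transition function $\delta:Q\times\Sigma\to Q$, extended to words; $q.w=\delta(q,w)$ and $S.w=\{q.w\mid q\in S\}$. $\Sigma^{\le c}$ is the set of words of length at most $c$. A reset word is a word $w$ with $|Q.w|=1$; $\mathcal{A}$ is synchronizing if it has one, and $\mathrm{rt}(\mathcal{A})$ (reset threshold) is the length of a shortest reset word. With $Q=\{1,\dots,n\}$, vectors in $\mathbb{R}^n$ are row vectors; $[K]\in\mathbb{R}^n$ is the characteristic vector of $K\subseteq Q$ and $[q]=[\{q\}]$. For a word $w$, $[w]$ is the $n\times n$ 0-1 matrix with $[w]_{p,q}=1$ iff $p.w=q$, so $[uv]=[u][v]$. $(\cdot,\cdot)$ is the standard inner product, $\langle\cdot\rangle$ linear span. For $S\subseteq Q$, $V_S=\langle [p]\mid p\in S\rangle$. A set of words $W$ is complete for a subspace $V\le\mathbb{R}^n$ with respect to $g\in V$ if $\langle g[w]\mid w\in W\rangle=V$. For a non-negative vector $g\in\mathbb{R}^n$, $\mathrm{DS}(g)=|\{(g,z)\mid z\in\{0,1\}^n\}|-1$ (the number of distinct positive subset sums of entries of $g$). *)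

From HB Require Import structures.
From mathcomp Require Import all_boot all_order all_algebra.
Set Implicit Arguments. Unset Strict Implicit. Unset Printing Implicit Defensive.
Import Order.TTheory GRing.Theory Num.Theory.
Local Open Scope ring_scope.

Section DFA.
Variables (n : nat) (Sigma : finType) (delta : 'I_n -> Sigma -> 'I_n).

Definition act (q : 'I_n) (w : seq Sigma) : 'I_n :=
  foldl (fun p a => delta p a) q w.

Definition setact (S : {set 'I_n}) (w : seq Sigma) : {set 'I_n} :=
  [set act q w | q in S].

Definition is_reset (w : seq Sigma) : Prop := #|setact [set: 'I_n] w| = 1%N.

Definition synchronizing : Prop := exists w, is_reset w.

Definition reach (W : seq (seq Sigma)) : {set 'I_n} :=
  [set q | [exists p : 'I_n, has (fun w => act p w == q) W]].

Definition wmx (R : realFieldType) (w : seq Sigma) : 'M[R]_n :=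
  \matrix_(p, q) ((act p w == q)%:R).

End DFA.

Definition is_min_size (T : Type) (P : T -> Prop) (sz : T -> nat) (k : nat) : Prop :=
  (exists x, P x /\ sz x = k) /\ (forall x, P x -> (k <= sz x)%N).

Definition rt_is n (Sigma : finType) (delta : 'I_n -> Sigma -> 'I_n) (k : nat) :=
  is_min_size (@is_reset n Sigma delta) size k.

(* the DFA B = A_c(W1,W2): state set R, alphabet the finite set of words W21,
   delta_B(q, w) = q.w.  A word over B is a list u of letters (words of W21);
   its action is that of the concatenation. *)
Definition B_is_reset n (Sigma : finType) (delta : 'I_n -> Sigma -> 'I_n)
    (R : {set 'I_n}) (W21 : seq (seq Sigma)) (u : seq (seq Sigma)) : Prop :=
  all (fun x => x \in W21) u /\ #|setact delta R (flatten u)| = 1%N.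

Definition B_synchronizing n (Sigma : finType) (delta : 'I_n -> Sigma -> 'I_n)
    (R : {set 'I_n}) (W21 : seq (seq Sigma)) : Prop :=
  exists u, B_is_reset delta R W21 u.

Definition B_rt_is n (Sigma : finType) (delta : 'I_n -> Sigma -> 'I_n)
    (R : {set 'I_n}) (W21 : seq (seq Sigma)) (k : nat) : Prop :=
  is_min_size (B_is_reset delta R W21) size k.

Definition concat_words (Sigma : Type) (W2 W1 : seq (seq Sigma)) : seq (seq Sigma) :=
  [seq w2 ++ w1 | w2 <- W2, w1 <- W1].

Definition charvec (R : realFieldType) n (K : {set 'I_n}) : 'rV[R]_n :=
  \row_i ((i \in K)%:R).

Definition inner (R : realFieldType) n (x y : 'rV[R]_n) : R :=
  \sum_i x 0 i * y 0 i.

Definition VS (R : realFieldType) n (S : {set 'I_n}) : 'M[R]_n :=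
  (\sum_(p in S) <<charvec R [set p]>>)%MS.

Definition distr_mx (R : realFieldType) n (Sigma : finType)
    (delta : 'I_n -> Sigma -> 'I_n) (W : seq (seq Sigma)) (P : seq Sigma -> R)
    : 'M[R]_n :=
  \sum_(w <- W) P w *: wmx delta R w.

(* positive probability distribution on the (duplicate-free) list W *)
Definition pos_distr (R : realFieldType) (Sigma : eqType) (W : seq (seq Sigma))
    (P : seq Sigma -> R) : Prop :=
  (forall w, w \in W -> 0 < P w) /\ \sum_(w <- W) P w = 1.

Definition complete_for (R : realFieldType) n (Sigma : finType)
    (delta : 'I_n -> Sigma -> 'I_n) (W : seq (seq Sigma)) (V : 'M[R]_n)
    (g : 'rV[R]_n) : Prop :=
  (\sum_(w <- W) <<g *m wmx delta R w>> == V)%MS.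

(* DS(g) = |{ (g,z) | z in {0,1}^n }| - 1, with z = [S] for S subset of Q *)
Definition DS (R : realFieldType) n (g : 'rV[R]_n) : nat :=
  (size (undup [seq inner g (charvec R K) | K : {set 'I_n}]) - 1)%N.

From HB Require Import structures.
From mathcomp Require Import all_boot all_order all_algebra.
From mathcomp Require Import zify.
Set Implicit Arguments. Unset Strict Implicit. Unset Printing Implicit Defensive.
Import Order.TTheory GRing.Theory Num.Theory.
Local Open Scope ring_scope.

(* Write alpha(K) for the inner product ([K], alpha).  The stationary vector
   alpha is a positive average of the vectors alpha [w], w in W2 W1, and these
   span V_R; so if no alpha [w] increases a functional x of V_R, all of them give
   it the value (x, alpha), and x - (x, alpha) [R] is orthogonal to V_R, i.e.
   x lies in <[R]>.  Taking x = [K :&: R] gives a letter w of B with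
   alpha(w^-1 K) > alpha(K).  Pulling a singleton back in this way strictly
   increases the weight through the positive subset sums of alpha until the
   target set contains R, so B has a reset word of length at most DS(alpha) - 1,
   and w0 followed by it resets A.  When R = Q, a letter merging two states lets
   one start from a set heavier than a singleton, which saves one letter of B at
   the price of one letter of A. *)

Section Actions.
Variables (n : nat) (Sigma : finType) (delta : 'I_n -> Sigma -> 'I_n).

Lemma act_cat q u v : act delta q (u ++ v) = act delta (act delta q u) v.
Proof. by rewrite /act foldl_cat. Qed.

Lemma setact_nil S : setact delta S [::] = S.
Proof. exact: imset_id. Qed.

Lemma setact_cat S u v :
  setact delta S (u ++ v) = setact delta (setact delta S u) v.
Proof. by rewrite /setact -imset_comp; apply: eq_imset => q; apply: act_cat. Qed.

Lemma card_setact_inj S w :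
  (forall a, injective (delta^~ a)) -> #|setact delta S w| = #|S|.
Proof.
move=> inj_delta; rewrite card_imset //.
by elim: w => [|a w IHw] p q //= /IHw; apply: inj_delta.
Qed.

Lemma card_setact_sub1 S w r :
  S != set0 -> setact delta S w \subset [set r] -> #|setact delta S w| = 1%N.
Proof.
by move=> S_neq0; rewrite subset1 imset_eq0 (negbTE S_neq0) orbF => /eqP->; rewrite cards1.
Qed.

Lemma exists_merging_letter :
  (1 < n)%N -> synchronizing delta ->
  exists a p p', p != p' /\ delta p a = delta p' a.
Proof.
move=> n_gt1 [w reset_w].
case: (boolP [exists a, exists p, exists p', (p != p') && (delta p a == delta p' a)]).
  by case/existsP=> a /existsP[p /existsP[p' /andP[neq_pp' /eqP]]]; exists a, p, p'.
rewrite negb_exists => /forallP no_merge.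
suff inj_delta a : injective (delta^~ a).
  by move: reset_w; rewrite /is_reset card_setact_inj // cardsT card_ord; lia.
move=> p p' /= eq_pp'; apply/eqP; apply: contraNT (no_merge a) => neq_pp'.
by apply/existsP; exists p; apply/existsP; exists p'; rewrite neq_pp' eq_pp' eqxx.
Qed.

Lemma act_reach W1 p w1 : w1 \in W1 -> act delta p w1 \in reach delta W1.
Proof. by move=> W1w1; rewrite inE; apply/existsP; exists p; apply/hasP; exists w1. Qed.

Lemma act_concat_words_reach W1 W2 q w :
  w \in concat_words W2 W1 -> act delta q w \in reach delta W1.
Proof. by case/allpairsP=> -[w2 w1] [_ /= W1w1 ->]; rewrite act_cat act_reach. Qed.

End Actions.

Lemma size_concat_words (T : eqType) (W1 W2 : seq (seq T)) d1 d2 :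
  {in W1, forall w1, size w1 <= d1}%N -> {in W2, forall w2, size w2 <= d2}%N ->
  {in concat_words W2 W1, forall w, size w <= d1 + d2}%N.
Proof.
move=> W1d1 W2d2 _ /allpairsP[[w2 w1] [/= W2w2 W1w1 ->]].
by rewrite size_cat addnC leq_add ?W1d1 ?W2d2.
Qed.

Lemma size_flatten_le (T : eqType) (u : seq (seq T)) d :
  {in u, forall w, size w <= d}%N -> (size (flatten u) <= size u * d)%N.
Proof.
elim: u => //= w u IHu ud; rewrite size_cat mulSn leq_add ?ud ?mem_head //.
by apply: IHu => v uv; rewrite ud // inE uv orbT.
Qed.

Section InnerProduct.
Variables (F : realFieldType) (n : nat).
Implicit Types (x y z : 'rV[F]_n) (K S : {set 'I_n}).

Lemma innerC x y : inner x y = inner y x.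
Proof. by apply: eq_bigr => i _; rewrite mulrC. Qed.

Lemma innerDl x y z : inner (x + y) z = inner x z + inner y z.
Proof. by rewrite /inner -big_split; apply: eq_bigr => i _; rewrite mxE mulrDl. Qed.

Lemma innerZl a x y : inner (a *: x) y = a * inner x y.
Proof. by rewrite /inner mulr_sumr; apply: eq_bigr => i _; rewrite mxE mulrA. Qed.

Lemma innerNl x y : inner (- x) y = - inner x y.
Proof. by rewrite -scaleN1r innerZl mulN1r. Qed.

Lemma innerDr x y z : inner x (y + z) = inner x y + inner x z.
Proof. by rewrite ![inner x _]innerC innerDl. Qed.

Lemma innerZr a x y : inner x (a *: y) = a * inner x y.
Proof. by rewrite ![inner x _]innerC innerZl. Qed.

Lemma inner0r x : inner x 0 = 0.
Proof. by rewrite -(scale0r 0) innerZr mul0r. Qed.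

Lemma inner_sumr (I : Type) (r : seq I) (P : pred I) x (G : I -> 'rV[F]_n) :
  inner x (\sum_(i <- r | P i) G i) = \sum_(i <- r | P i) inner x (G i).
Proof. exact: (big_morph _ (innerDr x) (inner0r x)). Qed.

Lemma innerE x y : inner x y = (x *m y^T) 0 0.
Proof. by rewrite mxE; apply: eq_bigr => i _; rewrite mxE. Qed.

Lemma inner_self_eq0 y : inner y y = 0 -> y = 0.
Proof.
move=> yy0; apply/rowP => i; rewrite mxE; apply/eqP; rewrite -sqrf_eq0 expr2.
by apply/eqP; apply: (psumr_eq0P _ yy0) => // j _; rewrite -expr2 sqr_ge0.
Qed.

Lemma inner_charvecE K x : inner (charvec F K) x = \sum_(i in K) x 0 i.
Proof.
rewrite /inner (bigID (mem K)) /= addrC big1 ?add0r.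
  by apply: eq_bigr => i Ki; rewrite mxE Ki mul1r.
by move=> i /negbTE Ki; rewrite mxE Ki mul0r.
Qed.

Lemma inner_charvec1 r x : inner (charvec F [set r]) x = x 0 r.
Proof. by rewrite inner_charvecE big_set1. Qed.

Lemma inner_charvec_ge0 K x : (forall i, 0 <= x 0 i) -> 0 <= inner (charvec F K) x.
Proof. by move=> x_ge0; rewrite inner_charvecE sumr_ge0. Qed.

Lemma inner_charvec_setIr K S x :
  (forall i, i \notin S -> x 0 i = 0) ->
  inner (charvec F (K :&: S)) x = inner (charvec F K) x.
Proof.
move=> x_supp; rewrite !inner_charvecE [RHS](big_setID S) /= [X in _ + X]big1 ?addr0 //.
by move=> i; rewrite inE => /andP[/x_supp].
Qed.

Lemma charvec_sub_VS K S : K \subset S -> (charvec F K <= VS F S)%MS.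
Proof.
move=> sKS; have -> : charvec F K = \sum_(p in K) charvec F [set p].
  apply/rowP => i; rewrite summxE mxE (eq_bigr (fun p => (p == i)%:R)); last first.
    by move=> p _; rewrite mxE inE eq_sym.
  case Ki: (i \in K); last by rewrite big1 // => p Kp; case: eqP Kp Ki => // -> ->.
  by rewrite (bigD1 i) //= eqxx big1 ?addr0 // => p /andP[_ /negbTE ->].
apply: summx_sub => p Kp; apply: (sumsmx_sup p); first exact: (subsetP sKS).
by rewrite genmxE.
Qed.

End InnerProduct.

Section WordMatrices.
Variables (F : realFieldType) (n : nat) (Sigma : finType) (delta : 'I_n -> Sigma -> 'I_n).
Local Notation "[ w ]" := (wmx delta F w).

Lemma wmx_cat u v : [u ++ v] = [u] *m [v].
Proof.
apply/matrixP => p q; rewrite !mxE act_cat (bigD1 (act delta p u)) //= !mxE eqxx mul1r.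
by rewrite big1 ?addr0 // => k /negbTE; rewrite !mxE eq_sym => ->; rewrite mul0r.
Qed.

Lemma inner_charvec_wmx K (x : 'rV[F]_n) w :
  inner (charvec F K) (x *m [w]) = inner (charvec F [set i | act delta i w \in K]) x.
Proof.
rewrite !inner_charvecE (eq_bigr (fun j => \sum_i x 0 i * (act delta i w == j)%:R)).
  rewrite exchange_big /= [RHS]big_mkcond; apply: eq_bigr => i _ /=.
  rewrite inE; case Kiw: (act delta i w \in K); last first.
    by rewrite big1 // => j Kj; case: eqP Kj Kiw => [-> -> //|_ _ _]; rewrite mulr0.
  rewrite (bigD1 (act delta i w)) //= eqxx mulr1 big1 ?addr0 // => j /andP[_].
  by rewrite eq_sym => /negbTE->; rewrite mulr0.
by move=> j _; rewrite mxE; apply: eq_bigr => i _; rewrite mxE.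
Qed.

Lemma complete_inner_eq0 (W : seq (seq Sigma)) (V : 'M[F]_n) g y :
  complete_for delta W V g -> (y <= V)%MS ->
  (forall w, w \in W -> inner y (g *m [w]) = 0) -> y = 0.
Proof.
move=> /andP[_ sVW] yV y_orth; apply: inner_self_eq0.
suff /sub_kermxP/matrixP/(_ 0 0) : (y <= kermx y^T)%MS by rewrite innerE => ->; rewrite mxE.
apply: submx_trans yV (submx_trans sVW _); rewrite big_seq.
elim/big_ind: _ => [|A B sA sB|w Ww]; first exact: sub0mx.
  by rewrite addsmx_sub sA.
rewrite genmxE; apply/sub_kermxP/rowP => i.
by rewrite ord1 [RHS]mxE -innerE innerC y_orth.
Qed.

End WordMatrices.

Lemma psumr2_eq0 (R : numDomainType) (I J : eqType) (s : seq I) (t : seq J)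
    (f : I -> J -> R) :
  (forall i j, i \in s -> j \in t -> 0 <= f i j) ->
  \sum_(i <- s) \sum_(j <- t) f i j = 0 ->
  forall i j, i \in s -> j \in t -> f i j = 0.
Proof.
move=> f_ge0 /eqP + i j si tj; rewrite big_seq psumr_eq0 => [/allP/(_ i si)|k sk].
  by rewrite si big_seq psumr_eq0 => [/allP/(_ j tj)/implyP/(_ tj)/eqP|l tl]; last exact: f_ge0.
by rewrite big_seq sumr_ge0 // => l tl; apply: f_ge0.
Qed.

Section StationaryVector.
Variables (F : realFieldType) (n : nat) (Sigma : finType) (delta : 'I_n -> Sigma -> 'I_n).
Variables (W1 W2 : seq (seq Sigma)) (P1 P2 : seq Sigma -> F) (alpha : 'rV[F]_n).
Hypotheses (P1_distr : pos_distr W1 P1) (P2_distr : pos_distr W2 P2).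
Hypothesis alpha_stationary :
  alpha *m distr_mx delta W2 P2 *m distr_mx delta W1 P1 = alpha.
Hypothesis alpha_complete :
  complete_for delta (concat_words W2 W1) (VS F (reach delta W1)) alpha.
Local Notation R := (reach delta W1).
Local Notation W21 := (concat_words W2 W1).
Local Notation "[ w ]" := (wmx delta F w).

Lemma inner_stationary x :
  inner x alpha =
  \sum_(w2 <- W2) \sum_(w1 <- W1) P2 w2 * P1 w1 * inner x (alpha *m [w2 ++ w1]).
Proof.
rewrite -{1}alpha_stationary /distr_mx [alpha *m _]mulmx_sumr mulmx_suml inner_sumr.
apply: eq_bigr => w2 _; rewrite -scalemxAr -scalemxAl mulmx_sumr scaler_sumr inner_sumr.
by apply: eq_bigr => w1 _; rewrite -scalemxAr scalerA innerZr wmx_cat mulmxA.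
Qed.

(* [alpha] is a positive average of the [alpha [w]], so a linear functional
   bounded above by its value at [alpha] must be constant on them. *)
Lemma stationary_extremal x :
  (forall w, w \in W21 -> inner x (alpha *m [w]) <= inner x alpha) ->
  forall w, w \in W21 -> inner x (alpha *m [w]) = inner x alpha.
Proof.
move=> le_x w /allpairsP[[w2 w1] [/= W2w2 W1w1 ->]].
have [[P1_gt0 P1_sum1] [P2_gt0 P2_sum1]] := (P1_distr, P2_distr).
set c := inner x alpha.
pose gap v2 v1 := P2 v2 * P1 v1 * (c - inner x (alpha *m [v2 ++ v1])).
have gap_ge0 v2 v1 : v2 \in W2 -> v1 \in W1 -> 0 <= gap v2 v1.
  move=> W2v2 W1v1; have W21v : v2 ++ v1 \in W21 by apply/allpairsP; exists (v2, v1).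
  by rewrite mulr_ge0 ?subr_ge0 ?le_x ?mulr_ge0 ?ltW ?P2_gt0 ?P1_gt0.
have gap_sum0 : \sum_(v2 <- W2) \sum_(v1 <- W1) gap v2 v1 = 0.
  have -> : \sum_(v2 <- W2) \sum_(v1 <- W1) gap v2 v1 =
            \sum_(v2 <- W2) \sum_(v1 <- W1) P2 v2 * P1 v1 * c - c.
    rewrite {2}/c inner_stationary -sumrB; apply: eq_bigr => v2 _.
    by rewrite -sumrB; apply: eq_bigr => v1 _; rewrite /gap mulrBr.
  under eq_bigr => v2 _ do rewrite -big_distrl -big_distrr /= P1_sum1 mulr1.
  by rewrite -big_distrl /= P2_sum1 mul1r subrr.
move/eqP: (psumr2_eq0 gap_ge0 gap_sum0 W2w2 W1w1).
by rewrite !mulf_eq0 (gt_eqF (P2_gt0 _ W2w2)) (gt_eqF (P1_gt0 _ W1w1)) subr_eq0 => /eqP.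
Qed.

Lemma stationary_gt0 : (forall i, 0 <= alpha 0 i) -> forall r, r \in R -> 0 < alpha 0 r.
Proof.
move=> alpha_ge0 r Rr; rewrite lt_def alpha_ge0 andbT; apply/eqP => alpha_r0.
have r_ge0 w : 0 <= inner (charvec F [set r]) (alpha *m [w]).
  by rewrite inner_charvec_wmx inner_charvec_ge0.
have r_eq0 w : w \in W21 -> inner (charvec F [set r]) (alpha *m [w]) = 0.
  have le_r v : v \in W21 ->
      inner (- charvec F [set r]) (alpha *m [v]) <= inner (- charvec F [set r]) alpha.
    by move=> _; rewrite !innerNl [inner _ alpha]inner_charvec1 alpha_r0 oppr0 oppr_le0.
  move=> /(stationary_extremal le_r)/eqP.
  by rewrite !innerNl [inner _ alpha]inner_charvec1 alpha_r0 oppr0 oppr_eq0 => /eqP.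
have rV : (charvec F [set r] <= VS F R)%MS by rewrite charvec_sub_VS // sub1set.
have /rowP/(_ r)/eqP := complete_inner_eq0 alpha_complete rV r_eq0.
by rewrite !mxE inE eqxx oner_eq0.
Qed.

Lemma inner_charvec_reach_wmx :
  \sum_i alpha 0 i = 1 ->
  forall w, w \in W21 -> inner (charvec F R) (alpha *m [w]) = 1.
Proof.
move=> alpha_sum1 w W21w; rewrite inner_charvec_wmx inner_charvecE -alpha_sum1.
by apply: eq_bigl => i; rewrite inE (act_concat_words_reach _ _ W21w).
Qed.

Lemma exists_wmx_increasing :
  \sum_i alpha 0 i = 1 ->
  forall x : 'rV[F]_n, (x <= VS F R)%MS -> ~~ (x <= charvec F R)%MS ->
  exists2 w, w \in W21 & inner x alpha < inner x (alpha *m [w]).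
Proof.
move=> alpha_sum1 x xV x_notR.
have [/hasP[w W21w lt_x]|no_incr] :=
  boolP (has (fun w => inner x alpha < inner x (alpha *m [w])) W21); first by exists w.
case/negP: x_notR.
have le_x w : w \in W21 -> inner x (alpha *m [w]) <= inner x alpha.
  by move=> W21w; rewrite leNgt; apply: contra no_incr => lt_x; apply/hasP; exists w.
set c := inner x alpha.
suff /eqP : x - c *: charvec F R = 0.
  by rewrite subr_eq0 => /eqP ->; rewrite scalemx_sub.
apply: (complete_inner_eq0 alpha_complete).
  by rewrite addmx_sub // -scaleNr scalemx_sub // charvec_sub_VS.
move=> w W21w; rewrite innerDl innerNl innerZl inner_charvec_reach_wmx //.
by rewrite mulr1 stationary_extremal // subrr.
Qed.

End StationaryVector.

Lemma count_ltn (T : eqType) (a b : pred T) (s : seq T) x :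
  subpred a b -> x \in s -> b x -> ~~ a x -> (count a s < count b s)%N.
Proof.
move=> sab; elim: s => //= y s IHs; rewrite inE => /predU1P[<-|sx] bx nax.
  by rewrite (negbTE nax) bx add0n add1n ltnS sub_count.
by rewrite -addnS leq_add ?IHs //; case: (a y) (@sab y) => // ->.
Qed.

Definition subset_sums (F : realFieldType) n (g : 'rV[F]_n) : seq F :=
  undup [seq inner g (charvec F K) | K : {set 'I_n}].

Definition sums_ge (F : realFieldType) n (g : 'rV[F]_n) (t : F) : nat :=
  count (fun s => t <= s) (subset_sums g).

Section SubsetSums.
Variables (F : realFieldType) (n : nat) (g : 'rV[F]_n).

Lemma DSE : DS g = (size (subset_sums g) - 1)%N.
Proof. by []. Qed.

Lemma mem_subset_sums K : inner (charvec F K) g \in subset_sums g.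
Proof. by rewrite mem_undup innerC; apply: map_f; rewrite mem_enum. Qed.

Lemma sums_ge_gt0 K : (0 < sums_ge g (inner (charvec F K) g))%N.
Proof.
by rewrite -has_count; apply/hasP; exists (inner (charvec F K) g); rewrite ?mem_subset_sums.
Qed.

Lemma sums_ge_ltn K t :
  inner (charvec F K) g < t -> (sums_ge g t < sums_ge g (inner (charvec F K) g))%N.
Proof.
move=> lt_Kt; apply: (count_ltn _ (mem_subset_sums K)); rewrite ?lexx -?ltNge //.
by move=> s /= /(lt_le_trans lt_Kt)/ltW.
Qed.

Lemma sums_ge_lt_size t : 0 < t -> (sums_ge g t < size (subset_sums g))%N.
Proof.
move=> t_gt0; apply: leq_trans (count_size _ _).
by apply: (sums_ge_ltn (K := set0)); rewrite inner_charvecE big_set0.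
Qed.

End SubsetSums.

Section Synchronization.
Variables (F : realFieldType) (n : nat) (Sigma : finType) (delta : 'I_n -> Sigma -> 'I_n).
Variables (W : seq (seq Sigma)) (R : {set 'I_n}) (alpha : 'rV[F]_n).
Hypothesis alpha_supp : forall i, i \notin R -> alpha 0 i = 0.
Hypothesis alpha_increasing :
  forall x, (x <= VS F R)%MS -> ~~ (x <= charvec F R)%MS ->
  exists2 w, w \in W & inner x alpha < inner x (alpha *m wmx delta F w).

(* Each letter of the chain strictly increases the weight of the target set, so
   the length is bounded by the number of subset sums above the initial one. *)
Lemma exists_B_word_into K :
  0 < inner (charvec F K) alpha ->
  exists u, [/\ all (fun w => w \in W) u, setact delta R (flatten u) \subset K
              & (size u < sums_ge alpha (inner (charvec F K) alpha))%N].
Proof.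
have [N] := ubnP (sums_ge alpha (inner (charvec F K) alpha)).
elim: N K => // N IHN K /ltnSE le_N K_gt0.
have [sRK|/subsetPn[r Rr Kr]] := boolP (R \subset K).
  by exists [::]; rewrite setact_nil sRK sums_ge_gt0.
set x := charvec F (K :&: R).
have alpha_x : inner x alpha = inner (charvec F K) alpha by apply: inner_charvec_setIr.
have [p /setIP[Kp Rp]] : exists p, p \in K :&: R.
  apply/set0Pn; apply: contraTneq K_gt0 => KR0.
  by rewrite -alpha_x /x KR0 inner_charvecE big_set0 ltxx.
have x_notR : ~~ (x <= charvec F R)%MS.
  apply/negP => /sub_rVP[a xE].
  have := congr1 (fun y : 'rV_n => y 0 r) xE; have := congr1 (fun y : 'rV_n => y 0 p) xE.
  rewrite !mxE !inE Kp Rp (negbTE Kr) Rr /= mulr1 => <-.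
  by move/eqP; rewrite eq_sym oner_eq0.
have xV : (x <= VS F R)%MS by rewrite charvec_sub_VS ?subsetIr.
have [w Ww] := alpha_increasing xV x_notR.
rewrite alpha_x inner_charvec_wmx; set K' := [set i | _] => lt_w.
have [u [Wu sRuK' lt_u]] :=
  IHN K' (leq_trans (sums_ge_ltn lt_w) le_N) (lt_trans K_gt0 lt_w).
exists (rcons u w); split.
- by rewrite all_rcons Ww.
- rewrite -cats1 flatten_cat /= cats0 setact_cat.
  apply/subsetP => _ /imsetP[q /(subsetP sRuK') + ->].
  by rewrite inE => /setIP[].
- by rewrite size_rcons (leq_ltn_trans lt_u (sums_ge_ltn lt_w)).
Qed.

Lemma exists_B_reset_word r :
  0 < alpha 0 r -> exists u, B_is_reset delta R W u /\ (size u <= DS alpha - 1)%N.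
Proof.
move=> alpha_r_gt0; have Rr : r \in R.
  by apply: contraTT alpha_r_gt0 => /alpha_supp->; rewrite ltxx.
have [|u [Wu sRu lt_u]] := @exists_B_word_into [set r]; first by rewrite inner_charvec1.
exists u; split.
  by split=> //; apply: card_setact_sub1 sRu; apply/set0Pn; exists r.
move: lt_u; rewrite -inner_charvec1 in alpha_r_gt0.
have := sums_ge_lt_size alpha alpha_r_gt0; rewrite DSE.
(* generalize, as [lia] does not identify convertible occurrences of a term *)
move: (size u) (sums_ge _ _) (size _) => su sr sS; lia.
Qed.

(* When every state is relevant, a merging letter [a] lets us aim at the
   preimage of [delta p a], whose weight exceeds that of a singleton. *)
Lemma exists_reset_word_full d :
  (0 < n)%N -> R = [set: 'I_n] -> (forall r, 0 < alpha 0 r) ->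
  synchronizing delta -> {in W, forall w, size w <= d}%N ->
  exists w, is_reset delta w /\ (size w <= 1 + (DS alpha - 2) * d)%N.
Proof.
move=> n_gt0 RQ alpha_gt0 sync_delta Wd.
have [n_gt1|n_le1] := ltnP 1 n; last first.
  by exists [::]; rewrite /is_reset setact_nil cardsT card_ord; split=> //; lia.
have [a [p [p' [neq_pp' eq_pp'a]]]] := exists_merging_letter n_gt1 sync_delta.
set K := [set i | delta i a == delta p a].
have lt_pK : inner (charvec F [set p]) alpha < inner (charvec F K) alpha.
  rewrite inner_charvec1 inner_charvecE (bigD1 p) ?inE //= (bigD1 p') /=; last first.
    by rewrite inE eq_pp'a eqxx eq_sym neq_pp'.
  by rewrite ltrDl ltr_wpDr ?alpha_gt0 // sumr_ge0 // => i _; apply: ltW.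
have [|u [Wu sQuK lt_u]] := @exists_B_word_into K.
  by apply: lt_trans lt_pK; rewrite inner_charvec1.
exists (flatten u ++ [:: a]); split.
  rewrite /is_reset setact_cat -RQ; apply: (card_setact_sub1 (r := delta p a)).
    by apply/set0Pn; exists (act delta p (flatten u)); rewrite imset_f // RQ inE.
  by apply/subsetP => _ /imsetP[q /(subsetP sQuK) + ->]; rewrite !inE.
rewrite size_cat addnC leq_add2l; apply: leq_trans (size_flatten_le _) _.
  by move=> w uw; apply: Wd; apply: (allP Wu).
have := sums_ge_ltn lt_pK; have := sums_ge_lt_size alpha (alpha_gt0 p).
rewrite -inner_charvec1 DSE leq_mul2r; move: lt_u.
move: (size u) (sums_ge _ _) (sums_ge _ _) (size _) => su sK sp sS; lia.
Qed.

End Synchronization.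

Theorem theorem1 (F : realFieldType) (n : nat) (Sigma : finType)
    (delta : 'I_n -> Sigma -> 'I_n)
    (d1 d2 : nat) (W1 W2 : seq (seq Sigma))
    (P1 P2 : seq Sigma -> F) (alpha : 'rV[F]_n) (w0 : seq Sigma) :
  (0 < n)%N -> (0 < #|Sigma|)%N ->
  (0 < d1)%N -> (0 < d2)%N ->
  uniq W1 -> uniq W2 -> W1 != [::] -> W2 != [::] ->
  (forall w, w \in W1 -> (size w <= d1)%N) ->
  (forall w, w \in W2 -> (size w <= d2)%N) ->
  pos_distr W1 P1 -> pos_distr W2 P2 ->
  let R := reach delta W1 in
  let W21 := concat_words W2 W1 in
  (forall i, 0 <= alpha 0 i) -> \sum_i alpha 0 i = 1 ->
  (forall i, i \notin R -> alpha 0 i = 0) ->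
  alpha *m distr_mx delta W2 P2 *m distr_mx delta W1 P1 = alpha ->
  complete_for delta W21 (VS F R) alpha ->
  setact delta [set: 'I_n] w0 = R ->
  (* (1) *)
  (forall x : 'rV[F]_n, (x <= VS F R)%MS -> ~~ (x <= charvec F R)%MS ->
     exists2 w, w \in W21 & inner x alpha < inner x (alpha *m wmx delta F w))
  (* (2) *)
  /\ (B_synchronizing delta R W21 /\
      forall k, B_rt_is delta R W21 k -> (k <= DS alpha - 1)%N)
  (* (3) *)
  /\ (synchronizing delta /\
      forall kA kB, rt_is delta kA -> B_rt_is delta R W21 kB ->
        (R != [set: 'I_n] ->
           (kA <= size w0 + kB * (d1 + d2))%N /\
           (size w0 + kB * (d1 + d2) <= size w0 + (DS alpha - 1) * (d1 + d2))%N) /\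
        (R = [set: 'I_n] -> (kA <= 1 + (DS alpha - 2) * (d1 + d2))%N)).
Proof.
move=> n_gt0 _ _ _ _ _ W1_neq0 _ W1d1 W2d2 P1_distr P2_distr R W21.
move=> alpha_ge0 alpha_sum1 alpha_supp alpha_stat alpha_compl w0R.
have incr := exists_wmx_increasing P1_distr P2_distr alpha_stat alpha_compl alpha_sum1.
have alpha_gt0 := stationary_gt0 P1_distr P2_distr alpha_stat alpha_compl alpha_ge0.
have W21d : {in W21, forall w, size w <= d1 + d2}%N := size_concat_words W1d1 W2d2.
have [w1 W1w1] : exists w1, w1 \in W1.
  by case: (W1) W1_neq0 => // w1 W1' _; exists w1; rewrite mem_head.
have [u0 [u0_reset u0_size]] :=
  exists_B_reset_word alpha_supp incr (alpha_gt0 _ (act_reach delta (Ordinal n_gt0) W1w1)).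
have A_reset u : B_is_reset delta R W21 u -> is_reset delta (w0 ++ flatten u).
  by move=> [_ card1]; rewrite /is_reset setact_cat w0R.
have A_sync : synchronizing delta by exists (w0 ++ flatten u0); apply: A_reset.
have B_rt_le k : B_rt_is delta R W21 k -> (k <= DS alpha - 1)%N.
  by move=> [_ kmin]; apply: leq_trans (kmin _ u0_reset) u0_size.
split=> //; split; first by split=> //; exists u0.
split=> // kA kB [_ kA_min] kB_rt; split=> [_|RQ].
  split; last by rewrite leq_add2l leq_mul2r (B_rt_le _ kB_rt) orbT.
  have [[u [u_reset <-]] _] := kB_rt.
  apply: leq_trans (kA_min _ (A_reset _ u_reset)) _; rewrite size_cat leq_add2l.
  by apply: size_flatten_le => w uw; apply: W21d; apply: (allP u_reset.1).
have alpha_pos r : 0 < alpha 0 r by apply: alpha_gt0; rewrite -/R RQ inE.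
have [w [w_reset w_size]] :=
  exists_reset_word_full alpha_supp incr n_gt0 RQ alpha_pos A_sync W21d.
exact: leq_trans (kA_min _ w_reset) w_size.
Qed.
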